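(* Let $F(X)=c_0+c_1X+\cdots+c_{d-1}X^{d-1}+X^d\in\mathbb{Z}[X]$ be monic irreducible, $\xi$ a fixed root, and $L=\mathbb{Q}(\xi)$ Galois over $\mathbb{Q}$ of degree $d$ with $G=\mathrm{Gal}(L/\mathbb{Q})$. Assume $\{\sigma\xi\}_{\sigma\in G}$ is a normal basis of $L/\mathbb{Q}$. Let $K_1,\dots,K_r$ be the conjugacy classes of $G$ and let $(a_{K_j,i})_{i\ge0}$ be the sequence with characteristic polynomial $F$ whose first $d$ terms are the $j$-th column of $P\Gamma_\xi^{-1}\kappa$, where $P=[\sigma^{-1}(\xi^{i-1})]_{1\le i\le d,\sigma\in G}$, $\Gamma_\xi=[\sigma\tau^{-1}(\xi)]_{\sigma,\tau\in G}$, and $\kappa=[\kappa_{\tau,j}]_{\tau\in G,1\le j\le r}$ with $\kappa_{\tau,j}=1$ if $\tau\in K_j$ and $0$ otherwise. Let $\{X_\sigma\}_{\sigma\in G}$ be indeterminates, $\Gamma=[X_{\sigma\tau^{-1}}]_{\sigma,\tau\in G}$ the group matrix, and $\partial_\tau=\frac{1}{|G|}\frac{\partial\det\Gamma}{\partial X_\tau}$. Denote by $\partial_\tau(\xi)$ and $\det\Gamma_\xi$ the values obtained by substituting $X_\sigma\mapsto\sigma\xi$ for all $\sigma$. Then for every integer $i\ge0$, $$a_{K_j,i}=\frac{1}{\det\Gamma_\xi}\sum_{\sigma\in G}\sum_{\tau\in K_j}\sigma(\xi^i)\,\partial_{\sigma\tau}(\xi).$$ Moreover, regard $G$ as a subgroup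 of the symmetric group $S_d$ via its (simply transitive) action on the $d$ roots $\{\sigma\xi\}$ of $F$. If $G\subset A_d$, then $$a_{K_j,i}=\frac{1}{\det\Gamma_\xi}\mathrm{Tr}_G\Big(\xi^i\sum_{\tau\in K_j}\partial_\tau(\xi)\Big).$$ If $G\not\subset A_d$, set $G^+=G\cap A_d$ and choose $\delta\in G$ with $G=G^+\sqcup\delta G^+$; then $$a_{K_j,i}=\frac{1}{\det\Gamma_\xi}\big(\mathrm{Tr}_{G^+}-\delta\circ\mathrm{Tr}_{G^+}\big)\Big(\xi^i\sum_{\tau\in K_j}\partial_\tau(\xi)\Big).$$
   Context: Matrices indexed by $G$ use a fixed total order on $G$. A sequence $(a_i)$ has characteristic polynomial $F$ if $a_{n+d}=-\sum_{k=0}^{d-1}c_ka_{n+k}$ for all $n\ge0$. For a subgroup $H\le G$, $\mathrm{Tr}_H(x)=\sum_{h\in H}h(x)$ for $x\in L$. *)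

From HB Require Import structures.
From mathcomp Require Import all_boot all_order all_algebra all_fingroup all_field.
From mathcomp Require Import mpoly.
Set Implicit Arguments. Unset Strict Implicit. Unset Printing Implicit Defensive.
Import GRing.Theory.
Local Open Scope ring_scope.

(* Elements of G are indexed by 'I_#|G|
   via enum_val / enum_rank_in (the "fixed total order" on G).            *)

Section Defs.
Variable L : splittingFieldType rat.

Definition galG : {group gal_of (fullv : {vspace L})} := 'Gal(fullv / 1%VS)%G.

(* composition sigma o tau of field automorphisms.  MathComp's group law on
   gal_of satisfies (x * y)%g a = y (x a), so sigma o tau = (tau * sigma)%g. *)
Definition gcomp (s t : gal_of (fullv : {vspace L})) := (t * s)%g.

Lemma gcompE s t a : gcomp s t a = s (t a).
Proof. by rewrite /gcomp galM ?memvf. Qed.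

Definition gelt (k : 'I_#|galG|) : gal_of (fullv : {vspace L}) := enum_val k.

Definition gidx (g : gal_of (fullv : {vspace L})) : 'I_#|galG| :=
  enum_rank_in (group1 galG) g.

(* P = [sigma^{-1}(xi^{i-1})]_{1<=i<=d, sigma in G}  (rows 0-indexed) *)
Definition Pmat (xi : L) (d : nat) : 'M[L]_(d, #|galG|) :=
  \matrix_(i < d, s < #|galG|) ((gelt s)^-1)%g (xi ^+ i).

Definition Gamma_xi (xi : L) : 'M[L]_#|galG| :=
  \matrix_(s, t) (gcomp (gelt s) ((gelt t)^-1)%g) xi.

Definition kappa : 'M[L]_(#|galG|, #|classes galG|) :=
  \matrix_(t, j) ((gelt t
                    \in (@enum_val _ (mem (classes galG)) j : {set _}))%:R).

Definition group_matrix : 'M[{mpoly L[#|galG|]}]_#|galG| :=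
  \matrix_(s, t) 'X_(gidx (gcomp (gelt s) ((gelt t)^-1)%g)).

Definition dpart (xi : L) (tau : gal_of (fullv : {vspace L})) : L :=
  (#|galG|%:R)^-1 *
    (mderiv (gidx tau) (\det group_matrix)).@[fun k => gelt k xi].

Definition TrH (H : {set gal_of (fullv : {vspace L})}) (x : L) : L :=
  \sum_(h in H) h x.

(* The permutation of the roots {tau xi} induced by sigma, with the root
   tau xi labelled by tau: tau xi |-> sigma(tau xi) = (sigma o tau) xi,
   i.e. tau |-> sigma o tau = (tau * sigma)%g, the regular action 'R. *)
Definition root_perm (s : gal_of (fullv : {vspace L})) :
  {perm gal_of (fullv : {vspace L})} := actperm 'R s.

Definition Gplus : {set gal_of (fullv : {vspace L})} :=
  [set s in galG | ~~ odd_perm (root_perm s)].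

Definition has_charpoly (F : {poly int}) (a : nat -> L) : Prop :=
  forall n, a (n + (size F).-1)%N =
    - \sum_(k < (size F).-1) (F`_k)%:~R * a (n + k)%N.

End Defs.

From HB Require Import structures.
From mathcomp Require Import all_boot all_order all_algebra all_fingroup all_field.
From mathcomp Require Import mpoly.
Set Implicit Arguments. Unset Strict Implicit. Unset Printing Implicit Defensive.
Import GRing.Theory.
Local Open Scope ring_scope.

(* The sequence b_i = (det Gamma_xi)^-1 sum_s sum_(tau in K_j) s(xi^i) d_(s tau)(xi)
   is a combination of the powers of the roots s(xi) of F, so it satisfies the
   recurrence of F; it therefore suffices to match the first d terms with the
   entries of P Gamma_xi^-1 kappa.  By Jacobi's formula and the translation
   invariance of a group matrix, d_tau(xi) is det Gamma_xi times the (1, tau)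
   entry of Gamma_xi^-1, which identifies the two.  Finally s(d_tau(xi)) is
   d_(s tau)(xi) up to the sign of s acting on the roots, because s permutes
   the rows of Gamma_xi; this turns the double sum into a signed trace, which
   is Tr_G when G is even and Tr_(G+) - delta o Tr_(G+) otherwise. *)

Section JacobiFormula.
Variables (R : comNzRingType) (m : nat) (i : 'I_m).
Local Notation D := (mderiv i).

Lemma mderiv_prod_uniq (I : eqType) (r : seq I) (F : I -> {mpoly R[m]}) :
  uniq r ->
  D (\prod_(k <- r) F k) = \sum_(k <- r) D (F k) * \prod_(l <- r | l != k) F l.
Proof.
elim: r => [|x r IH] /=; first by rewrite !big_nil mderivC.
case/andP=> xr ur; rewrite !big_cons mderivM IH // eqxx /=; congr (_ + _).
  congr (_ * _); rewrite big_seq_cond [RHS]big_seq_cond; apply: eq_bigl => l.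
  by case: (boolP (l \in r)) => //= lr; apply/esym/eqP => e; rewrite -e lr in xr.
rewrite big_distrr /= big_seq [RHS]big_seq; apply: eq_bigr => k kr.
have xk : x != k by apply/eqP => e; rewrite e kr in xr.
by rewrite big_cons xk mulrCA.
Qed.

Lemma mderivXU (j : 'I_m) : D ('X_j : {mpoly R[m]}) = (j == i)%:R.
Proof.
rewrite mderivX mnm1E; case: eqP => [->|_]; last by rewrite scale0r.
by rewrite -[X in (X - _)%MM]add0m addmK mpolyX0 scale1r.
Qed.

Lemma mderiv_det n (A : 'M[{mpoly R[m]}]_n) :
  D (\det A) = \sum_k \sum_l D (A k l) * cofactor A k l.
Proof.
rewrite /determinant raddf_sum /=.
transitivity (\sum_(s : 'S_n) \sum_k (-1) ^+ s *
                (D (A k (s k)) * \prod_(l | l != k) A l (s l))).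
  apply: eq_bigr => s _; rewrite -mulr_sumr.
  have -> : D ((-1) ^+ s * \prod_k A k (s k)) = (-1) ^+ s * D (\prod_k A k (s k)).
    by rewrite !mulr_sign; case: (odd_perm s); rewrite ?mderivN.
  by rewrite mderiv_prod_uniq ?index_enum_uniq.
rewrite exchange_big /=; apply: eq_bigr => k _.
rewrite (partition_big (fun s : 'S_n => s k) predT) //=.
apply: eq_bigr => l _; rewrite expand_cofactor mulr_sumr.
apply: eq_bigr => s /eqP sk; rewrite sk mulrCA; congr (_ * (_ * _)).
by apply: eq_bigl => l'; rewrite eq_sym.
Qed.

End JacobiFormula.

Lemma odd_perm_relabel (T1 T2 : finType) (f : T1 -> T2) (g : T2 -> T1)
    (q : {perm T1}) (q' : {perm T2}) :
  cancel f g -> cancel g f -> (forall y, q' y = f (q (g y))) ->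
  odd_perm q' = odd_perm q.
Proof.
move=> fK gK Dq'; have [ts Dq dts] := prod_tpermP q.
pose ts' := [seq (f t.1, f t.2) | t <- ts].
have -> : q' = (\prod_(t <- ts') tperm t.1 t.2)%g.
  apply/permP => y; rewrite Dq' Dq {Dq' Dq dts} /ts'.
  elim: ts y => [|t ts IH] y /=; first by rewrite !big_nil !perm1 gK.
  by rewrite !big_cons !permM -IH (inj_tperm _ _ _ (can_inj gK)) !fK.
rewrite Dq !odd_perm_prod ?size_map // all_map; apply: sub_all dts => t /=.
by rewrite /dpair (inj_eq (can_inj fK)).
Qed.

Lemma invmx_left (R : comUnitRingType) n (A B : 'M[R]_n) :
  B *m A = 1%:M -> invmx A = B.
Proof.
move=> BA; have [_ Au] := mulmx1_unit BA.
by rewrite -[LHS]mul1mx -BA mulmxK.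
Qed.

Section LinearRecurrences.
Variables (L : splittingFieldType rat) (F : {poly int}).
Local Notation d := (size F).-1.
Local Notation FL := (map_poly (fun c : int => c%:~R) F : {poly L}).

Lemma eq_has_charpoly (a b : nat -> L) :
  a =1 b -> has_charpoly F a -> has_charpoly F b.
Proof.
by move=> eq_ab ha n; rewrite -!eq_ab ha; under eq_bigr do rewrite eq_ab.
Qed.

Lemma has_charpoly_root (x : L) :
  F \is monic -> root FL x -> has_charpoly F (fun i => x ^+ i).
Proof.
move=> mF rFx n.
have sF : size F = d.+1 by rewrite prednK // size_poly_gt0 monic_neq0.
have lF : F`_d = 1 by rewrite -(monicP mF) lead_coefE.
move: rFx; rewrite /root horner_coef size_map_poly_id0; last first.
  by rewrite (monicP mF) rmorph1 oner_neq0.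
rewrite sF big_ord_recr /= coef_map /= lF rmorph1 mul1r addrC addr_eq0 => /eqP xd.
rewrite exprD xd mulrN mulr_sumr; congr (- _); apply: eq_bigr => k _.
by rewrite coef_map mulrCA -exprD.
Qed.

Lemma has_charpoly_lincomb (I : Type) (r : seq I) (c : I -> L) (a : I -> nat -> L) :
  (forall k, has_charpoly F (a k)) ->
  has_charpoly F (fun i => \sum_(k <- r) c k * a k i).
Proof.
move=> ha n; under eq_bigr => k _ do rewrite ha mulrN mulr_sumr.
rewrite sumrN exchange_big; congr (- _); apply: eq_bigr => l _.
by rewrite mulr_sumr; apply: eq_bigr => k _; rewrite mulrCA.
Qed.

Lemma has_charpoly_uniq (a b : nat -> L) :
  has_charpoly F a -> has_charpoly F b -> (forall i, (i < d)%N -> a i = b i) ->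
  a =1 b.
Proof.
move=> ha hb eq_init; elim/ltn_ind => i IH; case: (ltnP i d) => [|le_d_i].
  exact: eq_init.
rewrite -(subnK le_d_i) ha hb; congr (- _); apply: eq_bigr => k _.
by rewrite IH // -{2}(subnK le_d_i) ltn_add2l.
Qed.

End LinearRecurrences.

Section GaloisGroup.
Variable L : splittingFieldType rat.
Local Notation T := (gal_of (fullv : {vspace L})).
Local Notation n := #|galG L|.

Lemma mem_galG (s : T) : s \in galG L.
Proof. by rewrite /galG /= gal_kHom ?sub1v // k1AHom. Qed.

Lemma galGT : (galG L : {set T}) = [set: T].
Proof. by apply/setP => s; rewrite inE mem_galG. Qed.

Lemma geltK : cancel (@gidx L) (@gelt L).
Proof. by move=> s; rewrite /gelt /gidx enum_rankK_in ?mem_galG. Qed.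

Lemma gidxK : cancel (@gelt L) (@gidx L).
Proof. by move=> k; rewrite /gelt /gidx enum_valK_in. Qed.

Lemma gidx_inj : injective (@gidx L).
Proof. exact: can_inj geltK. Qed.

Lemma big_galG (F : T -> L) : \sum_(s in galG L) F s = \sum_(s : T) F s.
Proof. by apply: eq_bigl => s; rewrite mem_galG. Qed.

Lemma big_gidx (F : 'I_n -> L) : \sum_(k < n) F k = \sum_(s : T) F (gidx s).
Proof.
by rewrite (reindex (@gidx L)) //; exists (@gelt L) => k _; [exact: geltK|exact: gidxK].
Qed.

Lemma card_galG_neq0 : (n%:R : L) != 0.
Proof.
rewrite -scaler_nat scaler_eq0 oner_eq0 orbF Num.Theory.pnatr_eq0.
by rewrite -lt0n cardG_gt0.
Qed.

Definition signed_trace (x : L) : L :=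
  \sum_(s : T) (-1) ^+ odd_perm (root_perm s) * s x.

Lemma sign_Gplus (s : T) : s \in Gplus L -> (-1) ^+ odd_perm (root_perm s) = 1 :> L.
Proof. by rewrite inE => /andP[_ /negbTE ->]. Qed.

Lemma signed_trace_even (x : L) :
  galG L \subset Gplus L -> signed_trace x = TrH (galG L) x.
Proof.
move=> even_G; rewrite /TrH big_galG; apply: eq_bigr => s _.
by rewrite sign_Gplus ?mul1r // (subsetP even_G) ?mem_galG.
Qed.

Lemma signed_trace_coset (delta : T) (x : L) :
  Gplus L :&: (Gplus L :* delta)%g = set0 ->
  Gplus L :|: (Gplus L :* delta)%g = galG L ->
  signed_trace x = TrH (Gplus L) x - delta (TrH (Gplus L) x).
Proof.
move=> disj cover.
rewrite /signed_trace -big_galG -cover.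
rewrite (eq_bigl [predU Gplus L & (Gplus L :* delta)%g]) => [|s]; last first.
  by rewrite /= in_setU.
rewrite bigU /=; last by rewrite -setI_eq0 disj.
congr (_ + _); first by apply: eq_bigr => s /sign_Gplus ->; rewrite mul1r.
rewrite /TrH rmorph_sum -sumrN -rcosetE /rcoset big_imset /=; last first.
  by move=> s1 s2 _ _; apply: mulIg.
apply: eq_bigr => h Gplus_h.
have odd_h_delta : (h * delta)%g \notin Gplus L.
  apply/negP => Gplus_hd; move/setP: disj => /(_ (h * delta)%g).
  by rewrite in_setI Gplus_hd -rcosetE /rcoset (imset_f (fun s => s * delta)%g Gplus_h) in_set0.
move: odd_h_delta; rewrite inE mem_galG /= negbK => ->.
by rewrite expr1 mulN1r galM ?memvf.
Qed.

End GaloisGroup.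

Section GroupDeterminant.
Variables (L : splittingFieldType rat) (xi : L).
Local Notation T := (gal_of (fullv : {vspace L})).
Local Notation n := #|galG L|.
Local Notation Gam := (Gamma_xi xi).

Lemma Gamma_xiE (s t : T) : Gam (gidx s) (gidx t) = gcomp s t^-1%g xi.
Proof. by rewrite mxE !geltK. Qed.

(* A left kernel vector of Gamma_xi would give, since the s(xi) span L, a
   linear relation between the automorphisms, which Dedekind's lemma excludes. *)
Lemma Gamma_xi_unit :
  basis_of fullv [seq (s : T) xi | s in galG L] -> Gam \in unitmx.
Proof.
move=> normal_xi; rewrite unitmxE unitfE; apply/negP => /det0P [v nz_v vGam0].
pose c (s : T) := v 0 (gidx s).
have c_conj (u : T) : \sum_s c s * s (u xi) = 0.
  have := congr1 (fun w : 'rV[L]_n => w 0 (gidx u^-1%g)) vGam0.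
  rewrite !mxE big_gidx => sum0; rewrite -[in RHS]sum0; apply: eq_bigr => s _.
  by rewrite Gamma_xiE invgK gcompE.
pose X := in_tuple [seq (s : T) xi | s in galG L].
have c_all (x : L) : \sum_s c s * s x = 0.
  case/andP: normal_xi => /eqP spanX _.
  have : x \in <<X>>%VS by rewrite spanX memvf.
  move/coord_span => ->.
  under eq_bigr => s _ do rewrite linear_sum mulr_sumr.
  rewrite exchange_big /= big1 // => k _.
  under eq_bigr => s _ do rewrite linearZ /= -scalerAr.
  have : X`_k \in X by rewrite mem_nth.
  by case/mapP => u _ ->; rewrite -scaler_sumr c_conj scaler0.
have c0 s : c s = 0 := @gal_independent _ _ fullv predT c (fun x _ => c_all x) s isT.
by case/eqP: nz_v; apply/rowP => k; rewrite mxE -[k]gidxK; apply: c0.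
Qed.

Definition invGamma (s t : T) := invmx Gam (gidx s) (gidx t).

Hypothesis Gam_unit : Gam \in unitmx.

Lemma invGamma_translate (g s t : T) :
  invGamma (gcomp s g) (gcomp t g) = invGamma s t.
Proof.
pose h k := gidx (gcomp (gelt k) g).
have h_inj : injective h.
  by move=> k1 k2 /gidx_inj /mulgI; apply: (can_inj (@gidxK L)).
pose N := \matrix_(k, l) invmx Gam (h k) (h l).
suff invN : invmx Gam = N by rewrite /invGamma [in RHS]invN mxE /h !geltK.
apply: invmx_left; apply/matrixP => k l; rewrite !mxE.
have Gam_h k' : Gam k' l = Gam (h k') (h l).
  by rewrite -[k' in LHS]gidxK -[l in LHS]gidxK !Gamma_xiE /gcomp invMg !mulgA mulgKV.
under eq_bigr => k' _ do rewrite mxE Gam_h.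
transitivity (\sum_k' invmx Gam (h k) k' * Gam k' (h l)).
  by rewrite [in RHS](reindex_inj h_inj).
have := congr1 (fun M : 'M[L]_n => M (h k) (h l)) (mulVmx Gam_unit).
by rewrite !mxE (inj_eq h_inj) => ->.
Qed.

Let ev (k : 'I_n) := gelt k xi.

Lemma meval_cofactor_group_matrix k l :
  (cofactor (group_matrix L) k l).@[ev] = \det Gam * invGamma (gelt l) (gelt k).
Proof.
have eval_Gamma : map_mx (meval ev) (group_matrix L) = Gam.
  by apply/matrixP => k' l'; rewrite !mxE mevalXU /ev geltK.
have := congr1 (fun M : 'M[L]_n => M l k) (map_mx_adj (meval ev) (group_matrix L)).
rewrite !mxE eval_Gamma => ->.
rewrite /invGamma !gidxK /invmx Gam_unit mxE mxE mulrA mulfV ?mul1r //.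
by rewrite -unitfE -unitmxE.
Qed.

(* Jacobi's formula for the group determinant: the derivative in X_tau collects
   the cofactors of the n entries equal to X_tau, all of which evaluate to the
   same entry of the inverse by translation invariance. *)
Lemma dpartE (tau : T) : dpart xi tau = \det Gam * invGamma 1%g tau.
Proof.
rewrite /dpart mderiv_det rmorph_sum /=.
under eq_bigr => k _ do rewrite rmorph_sum /=.
under eq_bigr => k _ do under eq_bigr => l _ do
  rewrite rmorphM /= mxE mderivXU rmorph_nat meval_cofactor_group_matrix.
rewrite big_gidx; under eq_bigr => s _ do rewrite big_gidx.
have tau_entry s t : (gcomp s t^-1%g == tau) = (s == gcomp tau t).
  by rewrite /gcomp; apply/eqP/eqP => [<-|->]; [rewrite mulKVg|rewrite mulKg].
under eq_bigr => s _ do under eq_bigr => t _ do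
  rewrite !geltK (inj_eq (@gidx_inj L)) tau_entry.
rewrite exchange_big /=.
transitivity (n%:R^-1 * \sum_(t : T) \det Gam * invGamma 1%g tau).
  congr (_ * _); apply: eq_bigr => t _.
  rewrite (bigD1 (gcomp tau t)) //= eqxx mul1r big1 ?addr0.
    by rewrite -{1}[t]mulg1 invGamma_translate.
  by move=> s /negbTE ->; rewrite mul0r.
rewrite sumr_const -cardsT -galGT -(mulr_natr (\det Gam * _)) mulrC mulfK //.
exact: card_galG_neq0.
Qed.

Lemma invGammaE (s t : T) :
  invGamma s t = (\det Gam)^-1 * dpart xi (gcomp t s^-1%g).
Proof.
rewrite dpartE mulKf; last by rewrite -unitfE -unitmxE.
by rewrite -(invGamma_translate s^-1%g) /gcomp mulVg.
Qed.

Lemma sum_class_mulg (K : {set T}) (f : T -> L) (s : T) :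
  K \in classes (galG L) ->
  \sum_(tau in K) f (tau * s)%g = \sum_(tau in K) f (s * tau)%g.
Proof.
move=> K_class; rewrite (reindex_inj (conjg_inj s^-1%g)) /=.
have nKs : s^-1%g \in 'N(K)%g.
  by case/imsetP: K_class => x _ ->; apply: (subsetP (class_norm x _)); apply: mem_galG.
apply: eq_big => [tau|tau _]; first by rewrite memJ_norm.
by rewrite /conjg invgK -mulgA mulgVK.
Qed.

Lemma Pmat_invGamma_kappaE d (i : 'I_d) j :
  (Pmat xi d *m invmx Gam *m kappa L) i j =
  (\det Gam)^-1 * \sum_(s : T) \sum_(tau in (enum_val j : {set T}))
                    s (xi ^+ i) * dpart xi (gcomp s tau).
Proof.
set K := enum_val j; rewrite mxE.
transitivity (\sum_(t : T) (\sum_(s : T) s^-1%g (xi ^+ i) * invGamma s t) * (t \in K)%:R).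
  rewrite big_gidx; apply: eq_bigr => t _; rewrite !mxE big_gidx geltK.
  by congr (_ * _); apply: eq_bigr => s _; rewrite !mxE geltK.
transitivity ((\det Gam)^-1 *
    \sum_(s : T) \sum_(t in K) s^-1%g (xi ^+ i) * dpart xi (s^-1 * t)%g).
  rewrite mulr_sumr; under eq_bigr => t _ do rewrite mulr_suml.
  rewrite exchange_big /=; apply: eq_bigr => s _.
  rewrite [in RHS]big_mkcond mulr_sumr /=; apply: eq_bigr => t _.
  case: (t \in K); last by rewrite !mulr0.
  by rewrite mulr1 invGammaE /gcomp mulrCA.
congr (_ * _); rewrite (reindex_inj invg_inj) /=; apply: eq_bigr => s _.
rewrite invgK; symmetry.
exact: (@sum_class_mulg K (fun g => s (xi ^+ i) * dpart xi g) _ (enum_valP j)).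
Qed.

(* An automorphism s permutes the rows of Gamma_xi as it permutes the roots
   of F, so it multiplies the determinant by the sign of that permutation. *)
Lemma dpart_gal (s tau : T) :
  s (dpart xi tau) = (-1) ^+ odd_perm (root_perm s) * dpart xi (gcomp s tau).
Proof.
pose h k := gidx (gcomp s (gelt k)).
have h_inj : injective h.
  by move=> k1 k2 /gidx_inj /mulIg; apply: (can_inj (@gidxK L)).
pose p := perm h_inj.
have sGam : map_mx s Gam = row_perm p Gam.
  by apply/matrixP => k l; rewrite !mxE permE /h geltK !gcompE.
have s_det : s (\det Gam) = (-1) ^+ p * \det Gam.
  by rewrite -det_map_mx sGam row_permE det_mulmx det_perm.
have inv_row_perm : invmx (row_perm p Gam) = col_perm p (invmx Gam).
  apply: invmx_left; apply/matrixP => k l; rewrite !mxE.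
  transitivity (\sum_k' invmx Gam k k' * Gam k' l).
    by rewrite [in RHS](reindex_inj (@perm_inj _ p)); apply: eq_bigr => k' _; rewrite !mxE.
  by have := congr1 (fun M : 'M[L]_n => M k l) (mulVmx Gam_unit); rewrite !mxE => ->.
have s_inv : s (invGamma 1%g tau) = invGamma 1%g (gcomp s tau).
  have := congr1 (fun M : 'M[L]_n => M (gidx 1%g) (gidx tau)) (map_invmx s Gam).
  by rewrite mxE sGam inv_row_perm mxE permE /h geltK => ->.
have odd_p : odd_perm p = odd_perm (root_perm s).
  apply: (@odd_perm_relabel _ _ _ _ (root_perm s) p (@geltK L) (@gidxK L)) => k.
  by rewrite permE /h /root_perm actpermE.
rewrite !dpartE -odd_p mulrA -s_det -s_inv; exact: rmorphM.
Qed.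

Lemma sum_dpart_signed_trace (K : {set T}) (x : L) :
  \sum_(s : T) \sum_(tau in K) s x * dpart xi (gcomp s tau) =
  signed_trace (x * \sum_(tau in K) dpart xi tau).
Proof.
apply: eq_bigr => s _; rewrite rmorphM rmorph_sum /= !mulr_sumr.
apply: eq_bigr => tau _.
by rewrite dpart_gal [RHS]mulrCA [X in _ = _ * X]mulrA -expr2 sqrr_sign mul1r.
Qed.

Lemma has_charpoly_dpart_seq (F : {poly int}) (K : {set T}) :
  F \is monic -> root (map_poly (fun c : int => c%:~R) F : {poly L}) xi ->
  has_charpoly F (fun i => (\det Gam)^-1 *
    \sum_(s : T) \sum_(tau in K) s (xi ^+ i) * dpart xi (gcomp s tau)).
Proof.
move=> monF rootF.
pose w s := (\det Gam)^-1 * \sum_(tau in K) dpart xi (gcomp s tau).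
apply: (@eq_has_charpoly _ _ (fun i => \sum_(s <- index_enum T) w s * s xi ^+ i)).
  move=> i /=; rewrite mulr_sumr; apply: eq_bigr => s _.
  by rewrite -mulr_sumr rmorphXn /w mulrAC mulrA.
apply: has_charpoly_lincomb => s; apply: has_charpoly_root => //.
have -> : map_poly (fun c : int => c%:~R) F =
          map_poly s (map_poly (fun c : int => c%:~R) F : {poly L}).
  by rewrite -map_poly_comp; apply: eq_map_poly => c /=; rewrite rmorph_int.
exact: rmorph_root.
Qed.

End GroupDeterminant.

Theorem theorem1p2 (L : splittingFieldType rat) (F : {poly int}) (xi : L) :
  F \is monic ->
  irreducible_poly (map_poly (fun c : int => c%:~R) F : {poly rat}) ->
  root (map_poly (fun c : int => c%:~R) F : {poly L}) xi ->
  <<1; xi>>%VS = fullv ->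
  galois 1%VS (fullv : {vspace L}) ->
  \dim (fullv : {vspace L}) = (size F).-1 ->
  basis_of fullv [seq (s : gal_of (fullv : {vspace L})) xi | s in galG L] ->
  forall (j : 'I_#|classes (galG L)|) (a : nat -> L),
    has_charpoly F a ->
    (forall i : 'I_(size F).-1,
        a i = (Pmat xi (size F).-1 *m invmx (Gamma_xi xi) *m kappa L) i j) ->
    let K := (enum_val j : {set gal_of (fullv : {vspace L})}) in
    let y i := xi ^+ i * \sum_(tau in K) dpart xi tau in
    (forall i : nat,
        a i = (\det (Gamma_xi xi))^-1 *
              \sum_(s : gal_of (fullv : {vspace L}) | s \in galG L) \sum_(tau in K) s (xi ^+ i) * dpart xi (gcomp s tau))
    /\ (galG L \subset Gplus L ->
        forall i : nat, a i = (\det (Gamma_xi xi))^-1 * TrH (galG L) (y i))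
    /\ (~~ (galG L \subset Gplus L) ->
        forall delta : gal_of (fullv : {vspace L}), delta \in galG L ->
        Gplus L :&: (Gplus L :* delta)%g = set0 ->
        Gplus L :|: (Gplus L :* delta)%g = galG L ->
        forall i : nat,
          a i = (\det (Gamma_xi xi))^-1 *
                (TrH (Gplus L) (y i) - delta (TrH (Gplus L) (y i)))).
Proof.
move=> monF _ rootF _ _ _ normal_xi j a a_rec a_init K y.
have Gam_unit := Gamma_xi_unit normal_xi.
have aE : a =1 fun i => (\det (Gamma_xi xi))^-1 *
    \sum_(s : gal_of fullv) \sum_(tau in K) s (xi ^+ i) * dpart xi (gcomp s tau).
  apply: has_charpoly_uniq a_rec (has_charpoly_dpart_seq K monF rootF) _.
  move=> k lt_k_d.
  by rewrite (a_init (Ordinal lt_k_d)) Pmat_invGamma_kappaE.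
have aE_signed i : a i = (\det (Gamma_xi xi))^-1 * signed_trace (y i).
  by rewrite aE sum_dpart_signed_trace.
split; [|split].
- by move=> i; rewrite aE big_galG.
- by move=> even_G i; rewrite aE_signed signed_trace_even.
- by move=> _ delta _ disj cover i; rewrite aE_signed (signed_trace_coset _ disj cover).
Qed.
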